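(* Under the setting and assumptions described in the context, suppose that every subgradient returned by the oracle during the run of Algorithm MD is nonzero, and that the algorithm stops after $N$ iterations, where $N$ is the smallest positive integer with $$\sum_{i=0}^{N-1}\frac{1}{M_i^2}\ \ge\ \frac{2\Theta_0^2}{\varepsilon^2}.$$ Then the index set $I\subseteq\{0,\dots,N-1\}$ of ''productive'' steps is nonempty, so the output $\bar x^N=\big(\sum_{i\in I}h_i x^i\big)/\big(\sum_{i\in I}h_i\big)$ is well defined, and it satisfies $$f(\bar x^N)-f(x_* )\le\varepsilon,\qquad g(\bar x^N)\le\varepsilon .$$ Moreover, if $M>0$ is defined by $\frac{N}{M^2}=\sum_{i=0}^{N-1}\frac{1}{M_i^2}$ (an ''averaged'' subgradient norm replacing the global Lipschitz constant), then $N=\big\lceil 2M^2\Theta_0^2/\varepsilon^2\big\rceil$ in the sense that $N\ge 2M^2\Theta_0^2/\varepsilon^2$ with $N$ the first index at which the stopping criterion is met.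
   Context: Let $E$ be an $n$-dimensional real vector space with an arbitrary norm $\|\cdot\|$ and dual norm $\|\xi\|_*=\max\{\langle\xi,x\rangle:\|x\|\le1\}$ on $E^*$. Let $\mathcal X\subset E$ be a closed convex set, and let $f,g:\mathcal X\to\mathbb R$ be convex, subdifferentiable (at every point of $\mathcal X$ they have a subgradient with finite dual norm) and Lipschitz continuous. Consider the problem: minimize $f(x)$ over $x\in\mathcal X$ subject to $g(x)\le 0$, and let $x_*$ be a solution of it (so $g(x_* )\le0$ and $f(x_* )\le f(x)$ for all feasible $x$). A first-order oracle returns, for $x\in\mathcal X$, a subgradient $\nabla f(x)$ of $f$, a subgradient $\nabla g(x)$ of $g$, and the value $g(x)$. Let $d:\mathcal X\to\mathbb R$ (distance generating function) be continuously differentiable and 1-strongly convex w.r.t. $\|\cdot\|$, i.e. $\langle d'(x)-d'(y),x-y\rangle\ge\|x-y\|^2$ for all $x,y\in\mathcal X$, with a minimizer $x^0=\arg\min_{x\in\mathcal X}d(x)$. Let $\Theta_0>0$ satisfy $d(x_* )-d(x^0)\le\Theta_0^2$. The Bregman divergence is $V(x,y)=d(y)-d(x)-\langle d'(x),y-x\rangle$, and the proximal mapping is $\mathrm{Mirr}_x(y)=\arg\min_{u\in\mathcal X}\{\langle y,u\rangle+V(x,u)\}$ for $x\in\mathcal X$, $y\in E^*$. Algorithm MD (input $\varepsilon>0$, $\Theta_0^2$, $d$, $\mathcal X$): start at $x^0=\arg\min_{\mathcal X}d$, $I=\emptyset$. For $i=0,1,2,\dots$: if $g(x^i)\le\varepsilon$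 (''productive step''), set $M_i=\|\nabla f(x^i)\|_*$, $h_i=\varepsilon/M_i^2$, $x^{i+1}=\mathrm{Mirr}_{x^i}(h_i\nabla f(x^i))$ and add $i$ to $I$; otherwise (''non-productive step''), set $M_i=\|\nabla g(x^i)\|_*$, $h_i=\varepsilon/M_i^2$, $x^{i+1}=\mathrm{Mirr}_{x^i}(h_i\nabla g(x^i))$. Stop after iteration $N-1$, where $N$ is the first integer with $\sum_{i=0}^{N-1}M_i^{-2}\ge 2\Theta_0^2/\varepsilon^2$, and output $\bar x^N=\sum_{i\in I}h_ix^i/\sum_{i\in I}h_i$. *)

(* The n-dimensional space E is modelled as R^n in coordinates:
   vectors are functions nat -> R vanishing at indices >= n (predicate inE n).
   E^* is identified with R^n through the standard pairing <xi,x> = sum_{k<n} xi_k x_k. *)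
From Stdlib Require Import Reals.
Open Scope R_scope.

Definition vec := nat -> R.

Fixpoint rsum (N : nat) (f : nat -> R) : R :=
  match N with O => 0 | S k => rsum k f + f k end.

Definition inE (n : nat) (x : vec) : Prop := forall k, (n <= k)%nat -> x k = 0.

Definition vadd (x y : vec) : vec := fun k => x k + y k.
Definition vsub (x y : vec) : vec := fun k => x k - y k.
Definition vscal (a : R) (x : vec) : vec := fun k => a * x k.

Definition dot (n : nat) (xi x : vec) : R := rsum n (fun k => xi k * x k).

Definition nonzero_vec (n : nat) (x : vec) : Prop := exists k, (k < n)%nat /\ x k <> 0.

Definition is_norm (n : nat) (nrm : vec -> R) : Prop :=
  (forall x, inE n x -> 0 <= nrm x) /\
  (forall x, inE n x -> nrm x = 0 -> forall k, x k = 0) /\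
  (forall a x, inE n x -> nrm (vscal a x) = Rabs a * nrm x) /\
  (forall x y, inE n x -> inE n y -> nrm (vadd x y) <= nrm x + nrm y).

Definition is_dual_norm (n : nat) (nrm dn : vec -> R) : Prop :=
  forall xi, inE n xi ->
    (exists x, inE n x /\ nrm x <= 1 /\ dot n xi x = dn xi) /\
    (forall x, inE n x -> nrm x <= 1 -> dot n xi x <= dn xi).

Definition closed_convex (n : nat) (nrm : vec -> R) (X : vec -> Prop) : Prop :=
  (forall x, X x -> inE n x) /\
  (forall x y t, X x -> X y -> 0 <= t <= 1 -> X (vadd (vscal t x) (vscal (1 - t) y))) /\
  (forall x, inE n x -> (forall e, 0 < e -> exists y, X y /\ nrm (vsub x y) < e) -> X x).

Definition convex_on (X : vec -> Prop) (f : vec -> R) : Prop :=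
  forall x y t, X x -> X y -> 0 <= t <= 1 ->
    f (vadd (vscal t x) (vscal (1 - t) y)) <= t * f x + (1 - t) * f y.

Definition lipschitz_on (nrm : vec -> R) (X : vec -> Prop) (f : vec -> R) : Prop :=
  exists L, forall x y, X x -> X y -> Rabs (f x - f y) <= L * nrm (vsub x y).

Definition is_subgrad (n : nat) (X : vec -> Prop) (f : vec -> R) (x xi : vec) : Prop :=
  inE n xi /\ forall y, X y -> f y >= f x + dot n xi (vsub y x).

Definition C1_on (n : nat) (nrm dn : vec -> R) (X : vec -> Prop) (d : vec -> R) (dd : vec -> vec) : Prop :=
  (forall x, X x -> inE n (dd x)) /\
  (forall x, X x -> forall e, 0 < e -> exists del, 0 < del /\
      forall y, X y -> nrm (vsub y x) < del ->
        Rabs (d y - d x - dot n (dd x) (vsub y x)) <= e * nrm (vsub y x)) /\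
  (forall x, X x -> forall e, 0 < e -> exists del, 0 < del /\
      forall y, X y -> nrm (vsub y x) < del -> dn (vsub (dd y) (dd x)) < e).

Definition strongly_convex1 (n : nat) (nrm : vec -> R) (X : vec -> Prop) (dd : vec -> vec) : Prop :=
  forall x y, X x -> X y -> dot n (vsub (dd x) (dd y)) (vsub x y) >= (nrm (vsub x y)) ^ 2.

Definition is_argmin (X : vec -> Prop) (F : vec -> R) (u : vec) : Prop :=
  X u /\ forall w, X w -> F u <= F w.

Definition bregman (n : nat) (d : vec -> R) (dd : vec -> vec) (x y : vec) : R :=
  d y - d x - dot n (dd x) (vsub y x).

Definition is_mirr (n : nat) (X : vec -> Prop) (d : vec -> R) (dd : vec -> vec) (x y u : vec) : Prop :=
  is_argmin X (fun w => dot n y w + bregman n d dd x w) u.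

Definition productive (g : vec -> R) (eps : R) (x : vec) : bool :=
  if Rle_dec (g x) eps then true else false.

Definition md_sg (g : vec -> R) (gf gg : vec -> vec) (eps : R) (x : vec) : vec :=
  if productive g eps x then gf x else gg x.

Definition md_M (dn : vec -> R) (g : vec -> R) (gf gg : vec -> vec) (eps : R) (x : vec) : R :=
  dn (md_sg g gf gg eps x).

Definition md_h (dn : vec -> R) (g : vec -> R) (gf gg : vec -> vec) (eps : R) (x : vec) : R :=
  eps / (md_M dn g gf gg eps x) ^ 2.

Definition md_iterates (n : nat) (X : vec -> Prop) (d : vec -> R) (dd : vec -> vec)
  (dn : vec -> R) (g : vec -> R) (gf gg : vec -> vec) (eps : R) (x0 : vec)
  (xs : nat -> vec) (N : nat) : Prop :=
  xs 0%nat = x0 /\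
  forall i, (i < N)%nat ->
    is_mirr n X d dd (xs i)
      (vscal (md_h dn g gf gg eps (xs i)) (md_sg g gf gg eps (xs i))) (xs (S i)).

Definition md_S (dn : vec -> R) (g : vec -> R) (gf gg : vec -> vec) (eps : R)
  (xs : nat -> vec) (K : nat) : R :=
  rsum K (fun i => / (md_M dn g gf gg eps (xs i)) ^ 2).

Definition md_stops_at (dn : vec -> R) (g : vec -> R) (gf gg : vec -> vec) (eps Theta0 : R)
  (xs : nat -> vec) (N : nat) : Prop :=
  (1 <= N)%nat /\
  md_S dn g gf gg eps xs N >= 2 * Theta0 ^ 2 / eps ^ 2 /\
  forall K, (1 <= K < N)%nat -> md_S dn g gf gg eps xs K < 2 * Theta0 ^ 2 / eps ^ 2.

Definition md_output (dn : vec -> R) (g : vec -> R) (gf gg : vec -> vec) (eps : R)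
  (xs : nat -> vec) (N : nat) : vec :=
  fun k =>
    rsum N (fun i => if productive g eps (xs i)
                     then md_h dn g gf gg eps (xs i) * xs i k else 0) /
    rsum N (fun i => if productive g eps (xs i)
                     then md_h dn g gf gg eps (xs i) else 0).

(* Write [V_i = V(x^i, xstar)], [s_i] for the subgradient used at step [i] and [M_i = ||s_i||_*].
   Optimality of the prox step and 1-strong convexity of [d] give the three-point inequality
     [h_i <s_i, x^i - xstar> <= h_i^2 M_i^2 / 2 + V_i - V_(i+1)],
   whose first term is [eps^2 / (2 M_i^2)] for [h_i = eps / M_i^2].  On a non-productive step
   [<s_i, x^i - xstar> >= g x^i - g xstar > eps], so [V] drops by more than [eps^2 / (2 M_i^2)];
   on a productive step convexity turns the left side into [h_i (f x^i - f xstar)].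
   Telescoping, [V_0 <= Theta0^2] and the stopping rule [eps^2 / 2 * sum_i M_i^-2 >= Theta0^2]
   show that not every step is non-productive and that
   [sum_(i in I) h_i (f x^i - f xstar) <= eps * sum_(i in I) h_i].  Jensen's inequality for the
   weighted average then bounds [f] at the output and, since [g x^i <= eps] on [I], also [g]. *)

From Stdlib Require Import Reals Lra Lia Classical FunctionalExtensionality.
From Coquelicot Require Import Coquelicot.
Open Scope R_scope.

Lemma rsum_ext N f g : (forall i, (i < N)%nat -> f i = g i) -> rsum N f = rsum N g.
Proof.
  induction N as [|N IH]; intros H; simpl; [reflexivity|].
  rewrite IH by (intros; apply H; lia). rewrite H by lia. reflexivity.
Qed.

Lemma rsum_add N f g : rsum N (fun i => f i + g i) = rsum N f + rsum N g.
Proof. induction N; simpl; [lra | rewrite IHN; lra]. Qed.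

Lemma rsum_sub N f g : rsum N (fun i => f i - g i) = rsum N f - rsum N g.
Proof. induction N; simpl; [lra | rewrite IHN; lra]. Qed.

Lemma rsum_mult_l N c f : rsum N (fun i => c * f i) = c * rsum N f.
Proof. induction N; simpl; [lra | rewrite IHN; lra]. Qed.

Lemma rsum_telescope N (V : nat -> R) : rsum N (fun i => V i - V (S i)) = V 0%nat - V N.
Proof. induction N; simpl; [lra | rewrite IHN; lra]. Qed.

Lemma rsum_0 N : rsum N (fun _ => 0) = 0.
Proof. induction N; simpl; lra. Qed.

Lemma rsum_le N f g : (forall i, (i < N)%nat -> f i <= g i) -> rsum N f <= rsum N g.
Proof.
  induction N as [|N IH]; intros H; simpl; [lra|].
  assert (f N <= g N) by (apply H; lia).
  assert (rsum N f <= rsum N g) by (apply IH; intros; apply H; lia). lra.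
Qed.

Lemma rsum_lt N f g : (1 <= N)%nat -> (forall i, (i < N)%nat -> f i < g i) -> rsum N f < rsum N g.
Proof.
  intros HN H. destruct N as [|N]; [lia|]. simpl.
  assert (f N < g N) by (apply H; lia).
  assert (rsum N f <= rsum N g) by (apply rsum_le; intros; left; apply H; lia). lra.
Qed.

Lemma rsum_ge0 N f : (forall i, (i < N)%nat -> 0 <= f i) -> 0 <= rsum N f.
Proof.
  intros H. rewrite <- (rsum_0 N). apply rsum_le. exact H.
Qed.

Lemma rsum_gt0 N f j : (forall i, (i < N)%nat -> 0 <= f i) -> (j < N)%nat -> 0 < f j ->
  0 < rsum N f.
Proof.
  induction N as [|N IH]; intros H Hj Hfj; [lia|]. simpl.
  assert (0 <= f N) by (apply H; lia).
  destruct (Nat.eq_dec j N) as [->|Hne].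
  - assert (0 <= rsum N f) by (apply rsum_ge0; intros; apply H; lia). lra.
  - assert (0 < rsum N f) by (apply IH; [intros; apply H; lia | lia | exact Hfj]). lra.
Qed.

Lemma rsum_eq0 N f : (forall i, (i < N)%nat -> 0 <= f i) -> rsum N f = 0 ->
  forall i, (i < N)%nat -> f i = 0.
Proof.
  intros H Hs i Hi. destruct (H i Hi) as [Hp|]; [|auto].
  assert (0 < rsum N f) by (eapply rsum_gt0; eauto). lra.
Qed.

Lemma dot_vsub_l n a b p : dot n (vsub a b) p = dot n a p - dot n b p.
Proof. unfold dot, vsub. rewrite <- rsum_sub. apply rsum_ext; intros; ring. Qed.

Lemma dot_vsub_r n a p q : dot n a (vsub p q) = dot n a p - dot n a q.
Proof. unfold dot, vsub. rewrite <- rsum_sub. apply rsum_ext; intros; ring. Qed.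

Lemma dot_vscal_l n c a p : dot n (vscal c a) p = c * dot n a p.
Proof. unfold dot, vscal. rewrite <- rsum_mult_l. apply rsum_ext; intros; ring. Qed.

Lemma dot_vscal_r n a c p : dot n a (vscal c p) = c * dot n a p.
Proof. unfold dot, vscal. rewrite <- rsum_mult_l. apply rsum_ext; intros; ring. Qed.

Lemma inE_vsub n x y : inE n x -> inE n y -> inE n (vsub x y).
Proof. unfold inE, vsub; intros Hx Hy k Hk; rewrite Hx, Hy by exact Hk; ring. Qed.

Lemma inE_vscal n c x : inE n x -> inE n (vscal c x).
Proof. unfold inE, vscal; intros Hx k Hk; rewrite Hx by exact Hk; ring. Qed.

Section NormedSpace.

Variables (n : nat) (nrm dn : vec -> R).
Hypothesis Hnorm : is_norm n nrm.
Hypothesis Hdual : is_dual_norm n nrm dn.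

Lemma norm_vscal a x : inE n x -> nrm (vscal a x) = Rabs a * nrm x.
Proof. apply Hnorm. Qed.

Lemma norm_vsub_sym x u : inE n x -> inE n u -> nrm (vsub x u) = nrm (vsub u x).
Proof.
  intros Hx Hu.
  replace (vsub x u) with (vscal (-1) (vsub u x))
    by (apply functional_extensionality; intros k; unfold vsub, vscal; ring).
  rewrite norm_vscal by (apply inE_vsub; auto). rewrite Rabs_left by lra. ring.
Qed.

Lemma dot_le_dual_norm s v : inE n s -> inE n v -> dot n s v <= dn s * nrm v.
Proof.
  destruct Hnorm as [Hge0 [Hdef _]]. intros Hs Hv.
  destruct (Hge0 v Hv) as [Hpos|Hz].
  - (* test the dual norm on the unit vector v / ||v|| *)
    assert (Hunit : nrm (vscal (/ nrm v) v) = 1).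
    { rewrite norm_vscal, Rabs_right by (auto; left; apply Rinv_0_lt_compat; lra).
      field; lra. }
    assert (Hle : dot n s (vscal (/ nrm v) v) <= dn s)
      by (apply (proj2 (Hdual s Hs)); [apply inE_vscal; auto | lra]).
    rewrite dot_vscal_r in Hle.
    apply (Rmult_le_compat_r (nrm v)) in Hle; [|lra].
    replace (/ nrm v * dot n s v * nrm v) with (dot n s v) in Hle by (field; lra). exact Hle.
  - assert (Hv0 := Hdef v Hv (eq_sym Hz)). rewrite <- Hz.
    replace (dot n s v) with (rsum n (fun _ => 0))
      by (apply rsum_ext; intros; rewrite Hv0; ring).
    rewrite rsum_0. lra.
Qed.

Lemma dual_norm_gt0 s : inE n s -> nonzero_vec n s -> 0 < dn s.
Proof.
  intros Hs [k [Hk Hsk]].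
  assert (Hss : 0 < dot n s s).
  { apply (rsum_gt0 n _ k); [intros; apply Rle_0_sqr | exact Hk | apply Rsqr_pos_lt; exact Hsk]. }
  assert (Hle := dot_le_dual_norm s s Hs Hs).
  assert (0 <= nrm s) by (apply Hnorm; exact Hs).
  destruct (Rle_or_lt (dn s) 0); [nra | assumption].
Qed.

End NormedSpace.

Definition has_derivative_on01 (phi D : R -> R) : Prop :=
  forall tau, 0 <= tau <= 1 -> forall e, 0 < e -> exists del, 0 < del /\
    forall s, 0 <= s <= 1 -> Rabs (s - tau) < del ->
      Rabs (phi s - phi tau - (s - tau) * D tau) <= e * Rabs (s - tau).

(* [phi] is only controlled on [0, 1]; precomposing with the clamp gives a function on all
   of [R], continuous at the endpoints, to which the mean value theorem applies. *)
Definition clamp01 (t : R) : R := Rmax 0 (Rmin 1 t).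

Lemma clamp01_in t : 0 <= clamp01 t <= 1.
Proof. unfold clamp01, Rmax, Rmin; repeat destruct Rle_dec; lra. Qed.

Lemma clamp01_id t : 0 <= t <= 1 -> clamp01 t = t.
Proof. unfold clamp01, Rmax, Rmin; repeat destruct Rle_dec; lra. Qed.

Lemma clamp01_dist s t : 0 <= t <= 1 -> Rabs (clamp01 s - t) <= Rabs (s - t).
Proof. unfold clamp01, Rmax, Rmin, Rabs; repeat destruct Rle_dec; repeat destruct Rcase_abs; lra. Qed.

Section DerivativeOn01.

Variables (phi D : R -> R).
Hypothesis Hphi : has_derivative_on01 phi D.

Lemma derivative_on01_interior t : 0 < t < 1 ->
  derivable_pt_lim (fun s => phi (clamp01 s)) t (D t).
Proof.
  intros Ht e He.
  destruct (Hphi t ltac:(lra) (e / 2) ltac:(lra)) as [del [Hdel Hexp]].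
  assert (Hpos : 0 < Rmin del (Rmin t (1 - t))) by (repeat apply Rmin_glb_lt; lra).
  exists (mkposreal _ Hpos). intros h Hh0 Hh. simpl in Hh.
  assert (Hh1 := Rlt_le_trans _ _ _ Hh (Rmin_l _ _)).
  assert (Hh2 := Rlt_le_trans _ _ _ Hh (Rmin_r _ _)).
  assert (Hh3 := Rmin_l t (1 - t)). assert (Hh4 := Rmin_r t (1 - t)).
  assert (Habs := Rabs_pos_lt h Hh0). apply Rabs_def2 in Hh2.
  rewrite !clamp01_id by lra.
  specialize (Hexp (t + h) ltac:(lra)). replace (t + h - t) with h in Hexp by ring.
  specialize (Hexp Hh1).
  replace ((phi (t + h) - phi t) / h - D t) with ((phi (t + h) - phi t - h * D t) / h)
    by (field; exact Hh0).
  unfold Rdiv. rewrite Rabs_mult, Rabs_inv.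
  apply Rle_lt_trans with (e / 2 * Rabs h * / Rabs h).
  - apply Rmult_le_compat_r; [left; apply Rinv_0_lt_compat|]; lra.
  - replace (e / 2 * Rabs h * / Rabs h) with (e / 2) by (field; lra). lra.
Qed.

Lemma derivative_on01_continuity t : 0 <= t <= 1 ->
  continuity_pt (fun s => phi (clamp01 s)) t.
Proof.
  intros Ht e He.
  destruct (Hphi t Ht 1 ltac:(lra)) as [del [Hdel Hexp]].
  assert (HD := Rabs_pos (D t)).
  assert (Hpos : 0 < Rmin del (e / (1 + Rabs (D t))))
    by (apply Rmin_glb_lt; [lra | apply Rdiv_lt_0_compat; lra]).
  exists (Rmin del (e / (1 + Rabs (D t)))). split; [exact Hpos|].
  intros s [_ Hs]. simpl in *. unfold R_dist in *.
  assert (Hs1 := Rlt_le_trans _ _ _ Hs (Rmin_l _ _)).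
  assert (Hs2 := Rlt_le_trans _ _ _ Hs (Rmin_r _ _)).
  rewrite (clamp01_id t) by exact Ht.
  assert (Hc := clamp01_dist s t Ht).
  specialize (Hexp (clamp01 s) (clamp01_in s) ltac:(lra)).
  assert (Hprod : Rabs ((clamp01 s - t) * D t) = Rabs (clamp01 s - t) * Rabs (D t))
    by apply Rabs_mult.
  assert (Htri := Rabs_triang (phi (clamp01 s) - phi t - (clamp01 s - t) * D t)
                              ((clamp01 s - t) * D t)).
  replace (phi (clamp01 s) - phi t - (clamp01 s - t) * D t + (clamp01 s - t) * D t)
    with (phi (clamp01 s) - phi t) in Htri by ring.
  assert (Hlt : Rabs (s - t) * (1 + Rabs (D t)) < e).
  { replace e with (e / (1 + Rabs (D t)) * (1 + Rabs (D t))) by (field; lra).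
    apply Rmult_lt_compat_r; lra. }
  assert (0 <= Rabs (clamp01 s - t)) by apply Rabs_pos.
  nra.
Qed.

(* The mean value theorem applied to [phi t - (A t + c t^2 / 2)]. *)
Lemma derivative_on01_growth A c : (forall t, 0 <= t <= 1 -> A + c * t <= D t) ->
  A + c / 2 <= phi 1 - phi 0.
Proof.
  intros HD.
  set (P := fun t => t * A + c * t ^ 2 / 2).
  assert (HP : forall t, derivable_pt_lim P t (A + c * t)).
  { intros t. apply is_derive_Reals. unfold P. auto_derive; [exact I | field]. }
  destruct (MVT_gen (fun t => phi (clamp01 t) - P t) 0 1 (fun t => D t - (A + c * t)))
    as [t0 [Ht0 Heq]].
  - intros t Ht. rewrite Rmin_left, Rmax_right in Ht by lra.
    apply is_derive_Reals, (derivable_pt_lim_minus (fun s => phi (clamp01 s)) P).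
    + apply derivative_on01_interior; exact Ht.
    + apply HP.
  - intros t Ht. rewrite Rmin_left, Rmax_right in Ht by lra.
    apply (continuity_pt_minus (fun s => phi (clamp01 s)) P).
    + apply derivative_on01_continuity; exact Ht.
    + apply derivable_continuous_pt. exists (A + c * t). apply HP.
  - rewrite Rmin_left, Rmax_right in Ht0 by lra.
    rewrite !clamp01_id in Heq by lra. unfold P in Heq.
    specialize (HD t0 Ht0). nra.
Qed.

End DerivativeOn01.

Definition segment (x u : vec) (t : R) : vec := vadd (vscal t u) (vscal (1 - t) x).

Lemma vsub_segment x u a b :
  vsub (segment x u a) (segment x u b) = vscal (a - b) (vsub u x).
Proof. apply functional_extensionality; intros k; unfold segment, vsub, vadd, vscal; ring. Qed.

Lemma vsub_segment_l x u t : vsub (segment x u t) x = vscal t (vsub u x).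
Proof. apply functional_extensionality; intros k; unfold segment, vsub, vadd, vscal; ring. Qed.

Lemma segment0 x u : segment x u 0 = x.
Proof. apply functional_extensionality; intros k; unfold segment, vadd, vscal; ring. Qed.

Lemma segment1 x u : segment x u 1 = u.
Proof. apply functional_extensionality; intros k; unfold segment, vadd, vscal; ring. Qed.

Section Bregman.

Variables (n : nat) (nrm dn : vec -> R) (X : vec -> Prop) (d : vec -> R) (dd : vec -> vec).
Hypothesis Hnorm : is_norm n nrm.
Hypothesis HX : closed_convex n nrm X.
Hypothesis Hd : C1_on n nrm dn X d dd.
Hypothesis Hdsc : strongly_convex1 n nrm X dd.

Lemma X_inE x : X x -> inE n x.
Proof. apply HX. Qed.

Lemma segment_in_X x u t : X x -> X u -> 0 <= t <= 1 -> X (segment x u t).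
Proof. intros Hx Hu Ht. apply (proj1 (proj2 HX)); assumption. Qed.

Lemma d_segment_derivative x u : X x -> X u ->
  has_derivative_on01 (fun t => d (segment x u t)) (fun t => dot n (dd (segment x u t)) (vsub u x)).
Proof.
  intros Hx Hu tau Htau e He.
  set (r := nrm (vsub u x)).
  assert (Hr : 0 <= r) by (apply Hnorm, inE_vsub; apply X_inE; assumption).
  destruct (proj1 (proj2 Hd) (segment x u tau) (segment_in_X x u tau Hx Hu Htau)
              (e / (r + 1)) ltac:(apply Rdiv_lt_0_compat; lra)) as [del [Hdel Hexp]].
  exists (del / (r + 1)). split; [apply Rdiv_lt_0_compat; lra|].
  intros s Hs Hst.
  assert (Hn : nrm (vsub (segment x u s) (segment x u tau)) = Rabs (s - tau) * r)
    by (rewrite vsub_segment; apply (norm_vscal n nrm Hnorm), inE_vsub; apply X_inE; assumption).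
  assert (Hst0 := Rabs_pos (s - tau)).
  specialize (Hexp (segment x u s) (segment_in_X x u s Hx Hu Hs)).
  rewrite Hn, vsub_segment, dot_vscal_r in Hexp.
  eapply Rle_trans; [apply Hexp|].
  - replace del with (del / (r + 1) * (r + 1)) by (field; lra). nra.
  - replace (e / (r + 1) * (Rabs (s - tau) * r)) with (e * Rabs (s - tau) * (r / (r + 1)))
      by (field; lra).
    assert (r / (r + 1) <= 1)
      by (apply Rmult_le_reg_r with (r + 1); [lra | field_simplify; lra]).
    assert (0 <= e * Rabs (s - tau)) by nra. nra.
Qed.

Lemma d_segment_derivative_growth x u t : X x -> X u -> 0 <= t <= 1 ->
  dot n (dd x) (vsub u x) + nrm (vsub u x) ^ 2 * t <= dot n (dd (segment x u t)) (vsub u x).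
Proof.
  intros Hx Hu Ht.
  destruct (Req_dec t 0) as [->|Ht0]; [rewrite segment0; lra|].
  assert (Hsc := Hdsc _ _ (segment_in_X x u t Hx Hu Ht) Hx).
  assert (0 < t) by lra.
  rewrite vsub_segment_l, dot_vscal_r, dot_vsub_l, (norm_vscal n nrm Hnorm), Rabs_right in Hsc
    by (lra || (apply inE_vsub; apply X_inE; assumption)).
  apply Rmult_le_reg_l with t; [lra|]. nra.
Qed.

Lemma bregman_ge_half_sq x u : X x -> X u -> nrm (vsub u x) ^ 2 / 2 <= bregman n d dd x u.
Proof.
  intros Hx Hu.
  assert (H := derivative_on01_growth _ _ (d_segment_derivative x u Hx Hu)
                 (dot n (dd x) (vsub u x)) (nrm (vsub u x) ^ 2)
                 (fun t Ht => d_segment_derivative_growth x u t Hx Hu Ht)).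
  cbv beta in H. rewrite segment0, segment1 in H. unfold bregman. lra.
Qed.

(* If the derivative along [w - u] were negative, a small step from [u] towards [w] would
   decrease the objective. *)
Lemma first_order_optimality u a : X u ->
  (forall w, X w -> d u + dot n a u <= d w + dot n a w) ->
  forall w, X w -> 0 <= dot n a (vsub w u) + dot n (dd u) (vsub w u).
Proof.
  intros Hu Hmin w Hw.
  set (v := vsub w u). set (r := nrm v).
  assert (Hr : 0 <= r) by (apply Hnorm, inE_vsub; apply X_inE; assumption).
  set (D := dot n a v + dot n (dd u) v).
  destruct (Rle_or_lt 0 D) as [|HD]; [assumption|exfalso].
  set (e := - D / (2 * r + 2)).
  assert (He : 0 < e) by (apply Rdiv_lt_0_compat; lra).
  destruct (proj1 (proj2 Hd) u Hu e He) as [del [Hdel Hexp]].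
  set (t := del / (del + r)).
  assert (Ht0 : 0 < t) by (apply Rdiv_lt_0_compat; lra).
  assert (Ht1 : t <= 1) by (apply Rmult_le_reg_r with (del + r); [lra | unfold t; field_simplify; lra]).
  set (wt := segment u w t).
  assert (Hwt : X wt) by (apply segment_in_X; auto; lra).
  assert (Hsub : vsub wt u = vscal t v) by apply vsub_segment_l.
  assert (Hn : nrm (vsub wt u) = t * r)
    by (rewrite Hsub, (norm_vscal n nrm Hnorm), Rabs_right by (lra || (apply inE_vsub; apply X_inE; assumption));
        reflexivity).
  assert (Hlt : nrm (vsub wt u) < del).
  { rewrite Hn. apply Rmult_lt_reg_r with (del + r); [lra|]. unfold t. field_simplify; nra. }
  specialize (Hexp wt Hwt Hlt). rewrite Hn, Hsub, dot_vscal_r in Hexp.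
  specialize (Hmin wt Hwt).
  assert (Ha : dot n a wt - dot n a u = t * dot n a v) by (rewrite <- dot_vsub_r, Hsub; apply dot_vscal_r).
  apply Rabs_le_between in Hexp.
  assert (e * r < - D / 2) by (apply Rmult_lt_reg_r with (2 * r + 2); [lra | unfold e; field_simplify; nra]).
  unfold D in *. nra.
Qed.

Lemma bregman_argmin_le x0 w : is_argmin X d x0 -> X w -> bregman n d dd x0 w <= d w - d x0.
Proof.
  intros [Hx0 Hmin] Hw.
  assert (Hzero : forall p, dot n (fun _ => 0) p = 0)
    by (intros p; transitivity (rsum n (fun _ => 0)); [apply rsum_ext; intros; ring | apply rsum_0]).
  assert (H : 0 <= dot n (fun _ => 0) (vsub w x0) + dot n (dd x0) (vsub w x0)).
  { apply first_order_optimality; [assumption | | assumption].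
    intros w' Hw'. rewrite !Hzero. specialize (Hmin w' Hw'). lra. }
  rewrite Hzero in H. unfold bregman. lra.
Qed.

Hypothesis Hdual : is_dual_norm n nrm dn.

Lemma mirror_step_bound x u s h w : X x -> inE n s -> 0 < h ->
  is_mirr n X d dd x (vscal h s) u -> X w ->
  h * dot n s (vsub x w) <= h ^ 2 * dn s ^ 2 / 2 + bregman n d dd x w - bregman n d dd u w.
Proof.
  intros Hx Hs Hh [Hu Hmin] Hw.
  assert (Hopt : 0 <= dot n (vsub (vscal h s) (dd x)) (vsub w u) + dot n (dd u) (vsub w u)).
  { apply (first_order_optimality u); [assumption | | assumption].
    intros w' Hw'. specialize (Hmin w' Hw'). unfold bregman in Hmin.
    repeat rewrite ?dot_vsub_r, ?dot_vsub_l, ?dot_vscal_l in *. lra. }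
  assert (Hb := bregman_ge_half_sq x u Hx Hu).
  assert (Hdl := dot_le_dual_norm n nrm dn Hnorm Hdual s (vsub x u) Hs
                   (inE_vsub _ _ _ (X_inE x Hx) (X_inE u Hu))).
  rewrite (norm_vsub_sym n nrm Hnorm x u (X_inE x Hx) (X_inE u Hu)) in Hdl.
  set (r := nrm (vsub u x)) in *.
  unfold bregman in *.
  repeat rewrite ?dot_vsub_r, ?dot_vsub_l, ?dot_vscal_l in *.
  (* Young: [h <s, x - u> <= h^2 ||s||_*^2 / 2 + ||u - x||^2 / 2]. *)
  assert (0 <= (h * dn s - r) ^ 2) by apply pow2_ge_0.
  nra.
Qed.

End Bregman.

Definition wavg (K : nat) (a : nat -> R) (p : nat -> vec) : vec :=
  fun k => rsum K (fun i => a i * p i k) / rsum K a.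

Lemma jensen_wavg n nrm X F K a p : closed_convex n nrm X -> convex_on X F ->
  (forall i, (i < K)%nat -> 0 <= a i) -> (forall i, (i < K)%nat -> X (p i)) -> 0 < rsum K a ->
  X (wavg K a p) /\ F (wavg K a p) <= rsum K (fun i => a i * F (p i)) / rsum K a.
Proof.
  intros [_ [Hconv _]] HF. unfold wavg.
  induction K as [|K IH]; intros Ha Hp Hpos; simpl in *; [lra|].
  assert (HaK : 0 <= a K) by (apply Ha; lia).
  assert (HA : 0 <= rsum K a) by (apply rsum_ge0; intros; apply Ha; lia).
  destruct HA as [HA|HA].
  - (* the new average is a convex combination of the old one and [p K] *)
    destruct IH as [IHX IHF]; [intros; apply Ha; lia | intros; apply Hp; lia | exact HA |].
    set (P := fun k => rsum K (fun i => a i * p i k) / rsum K a) in *.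
    set (t := rsum K a / (rsum K a + a K)).
    assert (Heq : (fun k => (rsum K (fun i => a i * p i k) + a K * p K k) / (rsum K a + a K))
                  = vadd (vscal t P) (vscal (1 - t) (p K))).
    { apply functional_extensionality; intros k. unfold vadd, vscal, t, P. field. lra. }
    assert (Ht : 0 <= t <= 1).
    { unfold t. split; [apply Rdiv_le_0_compat; lra|].
      apply Rmult_le_reg_r with (rsum K a + a K); [lra | field_simplify; lra]. }
    rewrite Heq. split; [apply Hconv; auto; apply Hp; lia|].
    eapply Rle_trans; [apply HF; auto; apply Hp; lia|].
    replace ((rsum K (fun i => a i * F (p i)) + a K * F (p K)) / (rsum K a + a K))
      with (t * (rsum K (fun i => a i * F (p i)) / rsum K a) + (1 - t) * F (p K))
      by (unfold t; field; lra).
    apply Rplus_le_compat_r, Rmult_le_compat_l; lra.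
  - assert (Hz : forall i, (i < K)%nat -> a i = 0)
      by (apply rsum_eq0; [intros; apply Ha; lia | auto]).
    assert (Hsum0 : forall q : nat -> R, rsum K (fun i => a i * q i) = 0).
    { intros q. rewrite <- (rsum_0 K). apply rsum_ext. intros i Hi. rewrite Hz by exact Hi. ring. }
    rewrite <- HA, Hsum0.
    replace (fun k => (rsum K (fun i => a i * p i k) + a K * p K k) / (0 + a K)) with (p K)
      by (apply functional_extensionality; intros k; rewrite Hsum0; field; lra).
    split; [apply Hp; lia | right; field; lra].
Qed.

Lemma averaged_norm_count_bound (S M Theta0 eps : R) (N : nat) :
  S >= 2 * Theta0 ^ 2 / eps ^ 2 -> 0 < M -> INR N / M ^ 2 = S ->
  INR N >= 2 * M ^ 2 * Theta0 ^ 2 / eps ^ 2.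
Proof.
  intros HS HM HN.
  assert (HM2 : 0 < M ^ 2) by (apply pow_lt; exact HM).
  replace (INR N) with (S * M ^ 2) by (rewrite <- HN; field; lra).
  replace (2 * M ^ 2 * Theta0 ^ 2 / eps ^ 2) with (M ^ 2 * (2 * Theta0 ^ 2 / eps ^ 2))
    by (unfold Rdiv; ring).
  nra.
Qed.

Section MirrorDescent.

Variables (n : nat) (nrm dn : vec -> R) (X : vec -> Prop) (f g : vec -> R) (gf gg : vec -> vec)
  (d : vec -> R) (dd : vec -> vec) (x0 xstar : vec) (Theta0 eps : R) (xs : nat -> vec) (N : nat).
Hypothesis Hnorm : is_norm n nrm.
Hypothesis Hdual : is_dual_norm n nrm dn.
Hypothesis HX : closed_convex n nrm X.
Hypothesis Hgf : forall x, X x -> is_subgrad n X f x (gf x).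
Hypothesis Hgg : forall x, X x -> is_subgrad n X g x (gg x).
Hypothesis Hd : C1_on n nrm dn X d dd.
Hypothesis Hdsc : strongly_convex1 n nrm X dd.
Hypothesis Hx0 : is_argmin X d x0.
Hypothesis HXs : X xstar.
Hypothesis Hgs : g xstar <= 0.
Hypothesis HTheta0 : d xstar - d x0 <= Theta0 ^ 2.
Hypothesis Heps : 0 < eps.
Hypothesis Hrun : md_iterates n X d dd dn g gf gg eps x0 xs N.
Hypothesis Hnz : forall i, (i < N)%nat -> nonzero_vec n (gf (xs i)) /\ nonzero_vec n (gg (xs i)).
Hypothesis Hstop : md_stops_at dn g gf gg eps Theta0 xs N.

Let M i := md_M dn g gf gg eps (xs i).
Let V i := bregman n d dd (xs i) xstar.
Let w i := if productive g eps (xs i) then md_h dn g gf gg eps (xs i) else 0.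

Lemma md_iterate_in_X i : (i <= N)%nat -> X (xs i).
Proof.
  destruct Hrun as [Hxs0 Hstep].
  induction i as [|i IH]; intros Hi; [rewrite Hxs0; apply Hx0|].
  apply (Hstep i ltac:(lia)).
Qed.

Lemma md_sg_inE i : (i < N)%nat -> inE n (md_sg g gf gg eps (xs i)).
Proof.
  intros Hi. assert (HXi := md_iterate_in_X i ltac:(lia)).
  unfold md_sg. destruct (productive g eps (xs i)); [apply (Hgf _ HXi) | apply (Hgg _ HXi)].
Qed.

Lemma md_M_gt0 i : (i < N)%nat -> 0 < M i.
Proof.
  intros Hi. apply (dual_norm_gt0 n nrm dn Hnorm Hdual); [apply md_sg_inE; exact Hi|].
  unfold md_sg. destruct (productive g eps (xs i)); apply Hnz; exact Hi.
Qed.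

Lemma md_step_bound i : (i < N)%nat ->
  eps / M i ^ 2 * dot n (md_sg g gf gg eps (xs i)) (vsub (xs i) xstar)
    <= eps ^ 2 / 2 * / M i ^ 2 + V i - V (S i).
Proof.
  intros Hi. assert (HM := md_M_gt0 i Hi).
  assert (H := mirror_step_bound n nrm dn X d dd Hnorm HX Hd Hdsc Hdual (xs i) (xs (S i))
                 (md_sg g gf gg eps (xs i)) (eps / M i ^ 2) xstar
                 (md_iterate_in_X i ltac:(lia)) (md_sg_inE i Hi)
                 ltac:(apply Rdiv_lt_0_compat; [exact Heps | apply pow_lt; exact HM])
                 (proj2 Hrun i Hi) HXs).
  change (dn (md_sg g gf gg eps (xs i))) with (M i) in H.
  replace ((eps / M i ^ 2) ^ 2 * M i ^ 2 / 2) with (eps ^ 2 / 2 * / M i ^ 2) in H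
    by (field; lra).
  exact H.
Qed.

Lemma md_nonproductive_step i : (i < N)%nat -> eps < g (xs i) ->
  eps ^ 2 / 2 * / M i ^ 2 < V i - V (S i).
Proof.
  intros Hi Hg. assert (HM := md_M_gt0 i Hi). assert (HXi := md_iterate_in_X i ltac:(lia)).
  assert (Hstep := md_step_bound i Hi).
  assert (Hprod : productive g eps (xs i) = false)
    by (unfold productive; destruct (Rle_dec (g (xs i)) eps); [lra | reflexivity]).
  unfold md_sg in Hstep. rewrite Hprod in Hstep.
  destruct (Hgg _ HXi) as [_ Hsub]. specialize (Hsub xstar HXs).
  rewrite dot_vsub_r in Hstep, Hsub.
  assert (eps / M i ^ 2 * eps
          < eps / M i ^ 2 * (dot n (gg (xs i)) (xs i) - dot n (gg (xs i)) xstar))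
    by (apply Rmult_lt_compat_l; [apply Rdiv_lt_0_compat; [|apply pow_lt]|]; lra).
  replace (eps / M i ^ 2 * eps) with (eps ^ 2 * / M i ^ 2) in H by (field; lra).
  lra.
Qed.

Lemma md_step_weighted_gap i : (i < N)%nat ->
  w i * (f (xs i) - f xstar) + eps ^ 2 / 2 * / M i ^ 2 <= eps * w i + V i - V (S i).
Proof.
  intros Hi. assert (HM := md_M_gt0 i Hi). assert (HXi := md_iterate_in_X i ltac:(lia)).
  assert (Hstep := md_step_bound i Hi).
  assert (Hh : 0 < eps / M i ^ 2) by (apply Rdiv_lt_0_compat; [exact Heps | apply pow_lt; exact HM]).
  assert (Hheps : eps * (eps / M i ^ 2) = eps ^ 2 * / M i ^ 2) by (field; lra).
  unfold w, md_h, md_sg, productive in *. fold (M i) in *.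
  destruct (Rle_dec (g (xs i)) eps) as [Hprod|Hprod].
  - destruct (Hgf _ HXi) as [_ Hsub]. specialize (Hsub xstar HXs).
    rewrite dot_vsub_r in Hstep, Hsub.
    assert (eps / M i ^ 2 * (f (xs i) - f xstar)
            <= eps / M i ^ 2 * (dot n (gf (xs i)) (xs i) - dot n (gf (xs i)) xstar))
      by (apply Rmult_le_compat_l; lra).
    lra.
  - assert (H := md_nonproductive_step i Hi ltac:(lra)). lra.
Qed.

(* The stopping rule is exactly [Theta0^2 <= eps^2/2 * sum 1/M_i^2]. *)
Lemma md_potential_budget :
  rsum N (fun i => V i - V (S i)) <= eps ^ 2 / 2 * rsum N (fun i => / M i ^ 2).
Proof.
  rewrite rsum_telescope.
  assert (HV0 : V 0%nat <= Theta0 ^ 2).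
  { unfold V. rewrite (proj1 Hrun).
    assert (H := bregman_argmin_le n nrm dn X d dd Hnorm HX Hd x0 xstar Hx0 HXs). lra. }
  assert (HVN : 0 <= V N).
  { assert (H := bregman_ge_half_sq n nrm dn X d dd Hnorm HX Hd Hdsc (xs N) xstar
                   (md_iterate_in_X N (le_n N)) HXs).
    assert (0 <= nrm (vsub xstar (xs N)) ^ 2) by apply pow2_ge_0. unfold V. lra. }
  destruct Hstop as [_ [HS _]].
  change (md_S dn g gf gg eps xs N) with (rsum N (fun i => / M i ^ 2)) in HS.
  assert (eps ^ 2 / 2 * (2 * Theta0 ^ 2 / eps ^ 2) <= eps ^ 2 / 2 * rsum N (fun i => / M i ^ 2))
    by (apply Rmult_le_compat_l; [assert (0 < eps ^ 2) by (apply pow_lt; lra); lra | lra]).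
  replace (eps ^ 2 / 2 * (2 * Theta0 ^ 2 / eps ^ 2)) with (Theta0 ^ 2) in H by (field; lra).
  lra.
Qed.

Lemma md_productive_exists : exists i, (i < N)%nat /\ g (xs i) <= eps.
Proof.
  apply NNPP. intros Hnone.
  assert (Hall : forall i, (i < N)%nat -> eps ^ 2 / 2 * / M i ^ 2 < V i - V (S i)).
  { intros i Hi. apply md_nonproductive_step; [exact Hi|].
    apply Rnot_le_lt. intros Hle. apply Hnone. exists i. split; assumption. }
  assert (Hlt := rsum_lt N _ _ (proj1 Hstop) Hall).
  rewrite rsum_mult_l in Hlt.
  assert (Hbud := md_potential_budget). lra.
Qed.

Lemma md_weights_ge0 i : (i < N)%nat -> 0 <= w i.
Proof.
  intros Hi. unfold w. destruct (productive g eps (xs i)); [|lra].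
  unfold md_h. fold (M i). apply Rlt_le, Rdiv_lt_0_compat; [exact Heps | apply pow_lt, md_M_gt0, Hi].
Qed.

Lemma md_weights_sum_gt0 : 0 < rsum N w.
Proof.
  destruct md_productive_exists as [j [Hj Hgj]].
  apply (rsum_gt0 N w j md_weights_ge0 Hj).
  unfold w, productive. destruct (Rle_dec (g (xs j)) eps); [|lra].
  unfold md_h. fold (M j). apply Rdiv_lt_0_compat; [exact Heps | apply pow_lt, md_M_gt0, Hj].
Qed.

Lemma md_weighted_gap : rsum N (fun i => w i * (f (xs i) - f xstar)) <= eps * rsum N w.
Proof.
  assert (Hle := rsum_le N _ _ md_step_weighted_gap).
  rewrite !rsum_add in Hle. rewrite rsum_mult_l in Hle.
  replace (rsum N (fun i => eps * w i + V i - V (S i)))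
    with (eps * rsum N w + rsum N (fun i => V i - V (S i))) in Hle
    by (rewrite <- rsum_mult_l, <- rsum_add; apply rsum_ext; intros; ring).
  assert (Hbud := md_potential_budget). lra.
Qed.

Lemma md_output_wavg : md_output dn g gf gg eps xs N = wavg N w xs.
Proof.
  apply functional_extensionality; intros k. unfold md_output, wavg, w.
  f_equal; apply rsum_ext; intros i _; destruct (productive g eps (xs i)); ring.
Qed.

Lemma md_output_gap (F : vec -> R) : convex_on X F ->
  F (md_output dn g gf gg eps xs N) <= rsum N (fun i => w i * F (xs i)) / rsum N w.
Proof.
  intros HF. rewrite md_output_wavg.
  apply (jensen_wavg n nrm X F N w xs HX HF md_weights_ge0); [|exact md_weights_sum_gt0].
  intros i Hi. apply md_iterate_in_X. lia.
Qed.

Lemma md_output_objective : convex_on X f ->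
  f (md_output dn g gf gg eps xs N) - f xstar <= eps.
Proof.
  intros Hf. assert (HW := md_weights_sum_gt0).
  assert (Hgap := md_weighted_gap).
  rewrite (rsum_ext N _ (fun i => w i * f (xs i) - f xstar * w i)), rsum_sub, rsum_mult_l
    in Hgap by (intros; ring).
  assert (H := md_output_gap f Hf).
  enough (rsum N (fun i => w i * f (xs i)) / rsum N w <= eps + f xstar) by lra.
  apply Rmult_le_reg_r with (rsum N w); [exact HW|].
  unfold Rdiv. rewrite Rmult_assoc, Rinv_l by lra. lra.
Qed.

Lemma md_output_constraint : convex_on X g -> g (md_output dn g gf gg eps xs N) <= eps.
Proof.
  intros Hg. assert (HW := md_weights_sum_gt0).
  eapply Rle_trans; [apply md_output_gap, Hg|].
  apply Rmult_le_reg_r with (rsum N w); [exact HW|].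
  unfold Rdiv. rewrite Rmult_assoc, Rinv_l, Rmult_1_r, <- rsum_mult_l by lra.
  apply rsum_le. intros i Hi. assert (Hw := md_weights_ge0 i Hi). unfold w, productive in *.
  destruct (Rle_dec (g (xs i)) eps); [nra | lra].
Qed.

End MirrorDescent.

Theorem theorem1
  (n : nat) (nrm dn : vec -> R) (X : vec -> Prop)
  (f g : vec -> R) (gf gg : vec -> vec)
  (d : vec -> R) (dd : vec -> vec) (x0 xstar : vec)
  (Theta0 eps : R) (xs : nat -> vec) (N : nat)
  (Hnorm : is_norm n nrm)
  (Hdual : is_dual_norm n nrm dn)
  (HX : closed_convex n nrm X)
  (Hfconv : convex_on X f) (Hgconv : convex_on X g)
  (Hflip : lipschitz_on nrm X f) (Hglip : lipschitz_on nrm X g)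
  (Hgf : forall x, X x -> is_subgrad n X f x (gf x))
  (Hgg : forall x, X x -> is_subgrad n X g x (gg x))
  (Hxstar : X xstar /\ g xstar <= 0 /\
            forall x, X x -> g x <= 0 -> f xstar <= f x)
  (Hd : C1_on n nrm dn X d dd)
  (Hdsc : strongly_convex1 n nrm X dd)
  (Hx0 : is_argmin X d x0)
  (HTheta : 0 < Theta0) (HTheta0 : d xstar - d x0 <= Theta0 ^ 2)
  (Heps : 0 < eps)
  (Hrun : md_iterates n X d dd dn g gf gg eps x0 xs N)
  (Hnz : forall i, (i < N)%nat -> nonzero_vec n (gf (xs i)) /\ nonzero_vec n (gg (xs i)))
  (Hstop : md_stops_at dn g gf gg eps Theta0 xs N) :
  (exists i, (i < N)%nat /\ g (xs i) <= eps) /\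
  f (md_output dn g gf gg eps xs N) - f xstar <= eps /\
  g (md_output dn g gf gg eps xs N) <= eps /\
  (forall M, 0 < M -> INR N / M ^ 2 = md_S dn g gf gg eps xs N ->
     INR N >= 2 * M ^ 2 * Theta0 ^ 2 / eps ^ 2).
Proof.
  destruct Hxstar as [HXs [Hgs _]].
  split; [|split; [|split]].
  - now apply (md_productive_exists n nrm dn X f g gf gg d dd x0 xstar Theta0 eps xs N).
  - now apply (md_output_objective n nrm dn X f g gf gg d dd x0 xstar Theta0 eps xs N).
  - now apply (md_output_constraint n nrm dn X f g gf gg d dd x0 xstar Theta0 eps xs N).
  - intros M HM HSM. apply averaged_norm_count_bound with (md_S dn g gf gg eps xs N);
      [apply Hstop | exact HM | exact HSM].
Qed.
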